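(* For non-negative integers $m$ and $n$, \[ \overline{{ m+n \brack n }}_{q,t} = \sum_{ p \in \mathcal{D}_{m,n}} t^{d(p)} q^{wt(p)}. \]
   Context: An overpartition is a partition in which the last occurrence of each distinct part size may be overlined; its weight $|\lambda|$ is the sum of its parts. $\overline{{m+n \brack n}}_{q,t}=\sum_{\lambda} t^{\#_o(\lambda)} q^{|\lambda|}$, the sum over all overpartitions $\lambda$ with largest part at most $m$ and at most $n$ parts, $\#_o(\lambda)$ being the number of overlined parts. $\mathcal{D}_{m,n}$ is the set of lattice paths from $(0,0)$ to $(m,n)$ using steps from $(i,j)$ to $(i+1,j)$ (East), $(i,j+1)$ (North) or $(i+1,j+1)$ (North-East). The weight of a step from $(i,j)$ is $0$ for an East step, $i$ for a North step, and $i+1$ for a North-East step; $wt(p)$ is the sum of the weights of the steps of $p$, and $d(p)$ is the number of North-East steps of $p$. *)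

From HB Require Import structures.
From mathcomp Require Import all_boot all_order all_algebra.
Set Implicit Arguments. Unset Strict Implicit. Unset Printing Implicit Defensive.
Import GRing.Theory.
Local Open Scope ring_scope.

(* An overpartition with largest part <= m and at most n parts is encoded as
   a pair (s, O):
   - s : n.-tuple 'I_(m+1), weakly decreasing; its nonzero entries are the
     parts (zeros are padding), so there are at most n parts, each <= m;
   - O : {set 'I_(m+1)} a subset of the distinct (nonzero) part sizes of s,
     namely the sizes whose last occurrence is overlined. *)
Definition is_partition_tuple (m n : nat) (s : n.-tuple 'I_m.+1) : bool :=
  sorted (fun a b : 'I_m.+1 => (b <= a)%N) s.

Definition part_sizes (m n : nat) (s : n.-tuple 'I_m.+1) : {set 'I_m.+1} :=
  [set x in s | (0 < x)%N].

Definition overpartition_weight (m n : nat) (s : n.-tuple 'I_m.+1) : nat :=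
  sumn [seq val x | x <- s].

Definition overbinom (R : comRingType) (m n : nat) (q t : R) : R :=
  \sum_(s : n.-tuple 'I_m.+1 | is_partition_tuple s)
    \sum_(O : {set 'I_m.+1} | O \subset part_sizes s)
      t ^+ #|O| * q ^+ overpartition_weight s.

Inductive step := East | North | NorthEast.

Definition step_to_ord (x : step) : 'I_3 :=
  match x with East => inord 0 | North => inord 1 | NorthEast => inord 2 end.
Definition ord_to_step (i : 'I_3) : step :=
  match val i with 0 => East | 1 => North | _ => NorthEast end.
Lemma step_to_ordK : cancel step_to_ord ord_to_step.
Proof. by case; rewrite /ord_to_step /= inordK. Qed.

HB.instance Definition _ := Equality.copy step (can_type step_to_ordK).
HB.instance Definition _ := Choice.copy step (can_type step_to_ordK).
HB.instance Definition _ := Countable.copy step (can_type step_to_ordK).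
HB.instance Definition _ := Finite.copy step (can_type step_to_ordK).

Definition path_end (p : seq step) : nat * nat :=
  (count (fun x => (x == East) || (x == NorthEast)) p,
   count (fun x => (x == North) || (x == NorthEast)) p).

(* weight of a path whose current x-coordinate is i:
   East step weight 0, North step from (i,j) weight i,
   NorthEast step from (i,j) weight i+1 *)
Fixpoint wt_from (i : nat) (p : seq step) : nat :=
  match p with
  | [::] => 0
  | East :: p' => wt_from i.+1 p'
  | North :: p' => i + wt_from i p'
  | NorthEast :: p' => i.+1 + wt_from i.+1 p'
  end.

Definition wt (p : seq step) : nat := wt_from 0 p.

Definition dNE (p : seq step) : nat := count (pred1 NorthEast) p.

(* sum over D_{m,n}: every path in D_{m,n} has length between 0 and m+n *)
Definition path_sum (R : comRingType) (m n : nat) (q t : R) : R :=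
  \sum_(k < (m + n).+1)
    \sum_(p : k.-tuple step | path_end p == (m, n))
      t ^+ dNE p * q ^+ wt p.

From mathcomp Require Import all_boot all_order all_algebra.
From mathcomp Require Import ring zify.
Set Implicit Arguments. Unset Strict Implicit. Unset Printing Implicit Defensive.
Import GRing.Theory.
Local Open Scope ring_scope.

(* Both sides satisfy the overpartition analogue of the q-Pascal recurrence
     F(m+1,n+1) = F(m,n+1) + q^(m+1) (F(m+1,n) + t F(m,n)),
   with F(m,0) = F(0,n) = 1, which determines them.  For overpartitions,
   summing over the overlinings of a partition gives the factor (1+t)^d, d the
   number of distinct parts; the recurrence then splits on whether the largest
   part is m+1 and, if so, whether m+1 is also among the remaining parts.  For
   lattice paths it comes from the last step: a North or North-East step
   ending at (m+1, n+1) has weight m+1. *)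

Lemma sum_subset_expr_card (R : pzSemiRingType) (T : finType) (A : {set T}) (t : R) :
  \sum_(B : {set T} | B \subset A) t ^+ #|B| = (1 + t) ^+ #|A|.
Proof.
rewrite addrC exprD1n.
rewrite (partition_big (fun B : {set T} => (inord #|B| : 'I_#|A|.+1)) predT) //=.
apply: eq_bigr => k _.
rewrite (eq_bigr (fun _ => t ^+ k)); last first.
  by move=> B /andP[sBA /eqP <-]; rewrite inordK // ltnS subset_leq_card.
rewrite sumr_const -cards_draws; congr (_ *+ _).
apply: eq_card => B; rewrite inE unfold_in /=.
case sBA: (B \subset A) => //=.
apply/eqP/eqP => [<-|->]; first by rewrite inordK // ltnS subset_leq_card.
by apply: val_inj; rewrite /= inordK // ltn_ord.
Qed.

Section TupleSums.
Variables (R : nmodType) (T : finType).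

Lemma big_tuple0 (F : seq T -> R) : \sum_(s : 0.-tuple T) F s = F [::].
Proof. by rewrite (big_pred1 [tuple]) // => s; symmetry; apply/eqP; exact: tuple0. Qed.

Lemma big_tuple_cons n (F : seq T -> R) :
  \sum_(s : n.+1.-tuple T) F s = \sum_(x : T) \sum_(s : n.-tuple T) F (x :: s).
Proof.
rewrite pair_big /= (reindex (fun p : T * n.-tuple T => [tuple of p.1 :: p.2])) //=.
apply: onW_bij; exists (fun s : n.+1.-tuple T => (thead s, [tuple of behead s])).
  by case=> x s /=; congr pair; apply: val_inj.
by move=> s; rewrite /= [in RHS](tuple_eta s).
Qed.

Lemma big_tuple_rcons n (F : seq T -> R) :
  \sum_(s : n.+1.-tuple T) F s = \sum_(x : T) \sum_(s : n.-tuple T) F (rcons s x).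
Proof.
elim: n F => [|n IHn] F.
  rewrite big_tuple_cons; apply: eq_bigr => x _.
  by rewrite (big_tuple0 (fun s => F (x :: s))) (big_tuple0 (fun s => F (rcons s x))).
rewrite big_tuple_cons (eq_bigr _ (fun x _ => IHn (fun s => F (x :: s)))) exchange_big.
by apply: eq_bigr => y _; rewrite (big_tuple_cons _ (fun s => F (rcons s y))).
Qed.

End TupleSums.

Section BoxSums.
Variable R : nmodType.

Definition box_sum (m n : nat) (F : seq nat -> R) : R :=
  \sum_(s : n.-tuple 'I_m.+1) F (map val s).

Lemma box_sum0 m F : box_sum m 0 F = F [::].
Proof. exact: big_tuple0 (fun s => F (map val s)). Qed.

Lemma box_sumS m n F :
  box_sum m n.+1 F = \sum_(x < m.+1) box_sum m n (fun l => F ((x : nat) :: l)).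
Proof. exact: big_tuple_cons _ (fun s => F (map val s)). Qed.

Lemma eq_box_sum m n F G :
  (forall l, size l = n -> all (fun x => x <= m)%N l -> F l = G l) ->
  box_sum m n F = box_sum m n G.
Proof.
move=> eqFG; apply: eq_bigr => s _; apply: eqFG; first by rewrite size_map size_tuple.
by apply/allP => _ /mapP[x _ ->]; rewrite -ltnS ltn_ord.
Qed.

Lemma box_sum_restrict k m n F : (k <= m)%N ->
  box_sum m n (fun l => if all (fun x => x <= k)%N l then F l else 0) = box_sum k n F.
Proof.
move=> km; elim: n F => [|n IHn] F; first by rewrite !box_sum0.
rewrite !box_sumS (big_ord_widen m.+1 (fun x => box_sum k n (fun l => F (x :: l)))) //.
rewrite [RHS]big_mkcond; apply: eq_bigr => x _ /=; rewrite ltnS.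
case: (leqP x k) => [xk | kx]; first by rewrite -IHn.
exact: big1.
Qed.

End BoxSums.

Section QtPascal.
Variables (R : comPzRingType) (q t : R).

Definition qt_pascal (F : nat -> nat -> R) : Prop :=
  [/\ forall m, F m 0 = 1, forall n, F 0 n = 1
    & forall m n, F m.+1 n.+1 = F m n.+1 + q ^+ m.+1 * (F m.+1 n + t * F m n)].

Lemma qt_pascal_uniq F G : qt_pascal F -> qt_pascal G -> F =2 G.
Proof.
case=> Fm0 F0n FSS [Gm0 G0n GSS]; elim=> [|m IHm] n; first by rewrite F0n G0n.
elim: n => [|n IHn]; first by rewrite Fm0 Gm0.
by rewrite FSS GSS IHn !IHm.
Qed.

End QtPascal.

Section Overpartitions.
Variables (R : comNzRingType) (q t : R).

Definition distinct_parts (l : seq nat) : nat := size (undup [seq x <- l | (0 < x)%N]).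

Definition partition_weight (l : seq nat) : R :=
  if sorted geq l then (1 + t) ^+ distinct_parts l * q ^+ sumn l else 0.

Definition partition_box (m n : nat) : R := box_sum m n partition_weight.

Lemma card_part_sizes m n (s : n.-tuple 'I_m.+1) :
  #|part_sizes s| = distinct_parts (map val s).
Proof.
rewrite /part_sizes /distinct_parts filter_map undup_map_inj; last exact: val_inj.
rewrite size_map -(card_uniqP (undup_uniq _)) -cardsE; apply: eq_card => x.
by rewrite !inE mem_undup mem_filter andbC.
Qed.

Lemma overbinomE m n : overbinom m n q t = partition_box m n.
Proof.
rewrite /overbinom /partition_box /box_sum big_mkcond; apply: eq_bigr => s _.
rewrite /partition_weight /is_partition_tuple sorted_map.
by case: ifP => // _; rewrite -mulr_suml sum_subset_expr_card card_part_sizes.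
Qed.

Lemma distinct_parts_cons x l :
  distinct_parts (x :: l) = (((0 < x) && (x \notin l)) + distinct_parts l)%N.
Proof.
rewrite /distinct_parts /=; case: (ltnP 0 x) => [x_gt0 | //].
by rewrite /= mem_filter x_gt0; case: (x \in l).
Qed.

Lemma partition_weight_cons x l :
  partition_weight (x :: l) =
  if all (fun y => y <= x)%N l
  then (1 + t) ^+ ((0 < x)%N && (x \notin l)) * q ^+ x * partition_weight l
  else 0.
Proof.
rewrite /partition_weight /= (path_sortedE (rev_trans leq_trans)).
case: all => //=; case: sorted; last by rewrite mulr0.
by rewrite distinct_parts_cons !exprD; ring.
Qed.

Lemma partition_box_m0 m : partition_box m 0 = 1.
Proof. by rewrite /partition_box box_sum0 /partition_weight /= mulr1. Qed.

Lemma partition_box_0n n : partition_box 0 n = 1.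
Proof.
elim: n => [|n IHn]; first exact: partition_box_m0.
rewrite /partition_box box_sumS big_ord1 -[RHS]IHn; apply: eq_box_sum => l _ l_le0.
by rewrite partition_weight_cons l_le0 /= !expr0 !mul1r.
Qed.

Lemma partition_boxSS m n :
  partition_box m.+1 n.+1 =
  partition_box m n.+1 + q ^+ m.+1 * (partition_box m.+1 n + t * partition_box m n).
Proof.
rewrite /partition_box !box_sumS big_ord_recr /=; congr (_ + _).
  apply: eq_bigr => x _; rewrite -(box_sum_restrict _ _ (leqnSn m)).
  apply: eq_box_sum => l _ _.
  rewrite partition_weight_cons; case lx: all; last by case: ifP.
  by rewrite (sub_all _ lx) // => y /leq_trans; apply; rewrite -ltnS.
rewrite -(box_sum_restrict _ _ (leqnSn m)) /box_sum mulr_sumr -big_split mulr_sumr /=.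
apply: eq_bigr => s _; set l := map val s.
have l_le : all (fun y => y <= m.+1)%N l.
  by apply/allP => _ /mapP[x _ ->]; rewrite -ltnS ltn_ord.
have notin_le : (m.+1 \notin l) = all (fun y => y <= m)%N l.
  apply/idP/allP => [notin y yl | l_le_m].
    rewrite -ltnS ltn_neqAle (allP l_le y yl) andbT.
    by apply: contraNneq notin => <-.
  by apply/negP => /l_le_m; rewrite ltnn.
rewrite partition_weight_cons l_le notin_le.
by case: all; rewrite /= ?expr1 ?expr0; ring.
Qed.

Lemma overbinom_qt_pascal : qt_pascal q t (fun m n => overbinom m n q t).
Proof.
split=> [m|n|m n]; rewrite !overbinomE.
- exact: partition_box_m0.
- exact: partition_box_0n.
- exact: partition_boxSS.
Qed.

End Overpartitions.

Section LatticePaths.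

(* Equality on [step] is transported from ['I_3] and does not compute. *)
Lemma eq_stepE (x y : step) :
  (x == y) = match x, y with
             | East, East | North, North | NorthEast, NorthEast => true
             | _, _ => false
             end.
Proof. by apply/eqP/idP => [->|]; [case: y | case: x; case: y]. Qed.

Lemma sum_step (R : nmodType) (F : step -> R) :
  \sum_(x : step) F x = F East + F North + F NorthEast.
Proof.
have enumP : perm_eq (enum {: step}) [:: East; North; NorthEast].
  apply: uniq_perm (enum_uniq _) _ _ => [|x]; last first.
    by rewrite mem_enum !inE; case: x; rewrite eqxx ?orbT.
  by rewrite /= !inE !negb_or -!andbA; apply/and4P; split; apply/eqP.
by rewrite -big_enum (perm_big _ enumP) !big_cons big_nil /= addr0 addrA.
Qed.

Lemma path_end_rcons p x :
  path_end (rcons p x) = ((path_end p).1 + (x != North), (path_end p).2 + (x != East))%N.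
Proof. by rewrite /path_end -cats1 !count_cat /=; case: x; rewrite !eq_stepE. Qed.

Lemma dNE_rcons p x : dNE (rcons p x) = (dNE p + (x == NorthEast))%N.
Proof. by rewrite /dNE -cats1 count_cat /= addn0. Qed.

Lemma wt_from_rcons i p x :
  wt_from i (rcons p x) = (wt_from i p + (x != East) * (i + (path_end (rcons p x)).1))%N.
Proof.
elim: p i => [|y p IHp] i; first by case: x; rewrite /path_end /= !eq_stepE /=; lia.
by case: y; rewrite /= IHp /path_end /= !eq_stepE /=; lia.
Qed.

Lemma size_le_path_end p : (size p <= (path_end p).1 + (path_end p).2)%N.
Proof.
rewrite -count_predUI -(@eq_count _ predT) ?count_predT ?leq_addr // => x.
by case: x; rewrite /= !eq_stepE.
Qed.

Variables (R : comNzRingType) (q t : R).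

Definition path_weight (m n : nat) (p : seq step) : R :=
  if path_end p == (m, n) then t ^+ dNE p * q ^+ wt p else 0.

Definition path_gf (k m n : nat) : R := \sum_(p : k.-tuple step) path_weight m n p.

Lemma path_weight_rcons m n p x :
  path_weight m n (rcons p x) =
  if ((x != North) <= m)%N && ((x != East) <= n)%N
  then t ^+ (x == NorthEast) * q ^+ ((x != East) * m)
       * path_weight (m - (x != North)) (n - (x != East)) p
  else 0.
Proof.
rewrite /path_weight /wt wt_from_rcons dNE_rcons !path_end_rcons.
case: (path_end p) => a b /=; case: ifPn => [/eqP[<- <-] | neq].
  by rewrite !leq_addl !addnK eqxx /= !exprD; ring.
case: ifP => // /andP[xm xn]; rewrite ifN ?mulr0 //.
by apply: contraNneq neq => -[-> ->]; rewrite !subnK.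
Qed.

Lemma path_gf0 m n : path_gf 0 m n = ((m == 0%N) && (n == 0%N))%:R.
Proof.
rewrite /path_gf (big_tuple0 (path_weight m n)) /path_weight.
by case: m n => [|m] [|n] /=; rewrite ?mulr1.
Qed.

Lemma path_gfS k m n :
  path_gf k.+1 m n =
  (if m is m'.+1 then path_gf k m' n else 0)
  + (if n is n'.+1 then q ^+ m * path_gf k m n' else 0)
  + (if (m, n) is (m'.+1, n'.+1) then t * q ^+ m * path_gf k m' n' else 0).
Proof.
rewrite /path_gf big_tuple_rcons.
under eq_bigr => x _ do under eq_bigr => p _ do rewrite path_weight_rcons.
rewrite sum_step !eq_stepE /=.
by case: m => [|m]; case: n => [|n];
  rewrite /= ?big1_eq ?subn0 ?subn1 ?mul0n ?mul1n ?expr0 ?expr1 ?mul1r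
    -?mulr_sumr ?mul1r ?add0r ?addr0.
Qed.

Lemma path_gf_eq0 k m n : (m + n < k)%N -> path_gf k m n = 0.
Proof.
move=> mn_lt_k; apply: big1 => p _; rewrite /path_weight; case: eqP => // end_p.
by have := size_le_path_end p; rewrite end_p size_tuple leqNgt mn_lt_k.
Qed.

Lemma path_sum_widen N m n :
  (m + n < N)%N -> path_sum m n q t = \sum_(k < N) path_gf k m n.
Proof.
move=> mn_lt_N.
have -> : path_sum m n q t = \sum_(k < (m + n).+1) path_gf k m n.
  by apply: eq_bigr => k _; rewrite big_mkcond.
rewrite (big_ord_widen N (fun k => path_gf k m n)) // big_mkcond.
by apply: eq_bigr => k _; case: ltnP => // k_gt; rewrite path_gf_eq0.
Qed.

Lemma path_sum_recl m n :
  path_sum m n q t = path_gf 0 m n + \sum_(k < (m + n).+1) path_gf k.+1 m n.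
Proof. by rewrite (@path_sum_widen (m + n).+2) // big_ord_recl. Qed.

Lemma path_sum_qt_pascal : qt_pascal q t (fun m n => path_sum m n q t).
Proof.
split=> [m|n|m n].
- elim: m => [|m IHm]; first by rewrite (@path_sum_widen 1) // big_ord1 path_gf0.
  rewrite path_sum_recl path_gf0 add0r -IHm (@path_sum_widen (m.+1 + 0).+1) //.
  by apply: eq_bigr => k _; rewrite path_gfS /= !addr0.
- elim: n => [|n IHn]; first by rewrite (@path_sum_widen 1) // big_ord1 path_gf0.
  rewrite path_sum_recl path_gf0 add0r -IHn (@path_sum_widen (0 + n.+1).+1) //.
  by apply: eq_bigr => k _; rewrite path_gfS /= expr0 mul1r add0r addr0.
rewrite path_sum_recl path_gf0 add0r.
under eq_bigr do rewrite path_gfS.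
rewrite !big_split -!mulr_sumr -!path_sum_widen; try lia.
by rewrite /=; ring.
Qed.

End LatticePaths.

Theorem proposition2p1 (R : comRingType) (m n : nat) (q t : R) :
  overbinom m n q t = path_sum m n q t.
Proof. exact: qt_pascal_uniq (overbinom_qt_pascal q t) (path_sum_qt_pascal q t) m n. Qed.
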